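(* Let $e_1,\dots,e_N$ be $N$ entities, each entity $e$ having a utility $U(e)\ge 0$, a perceived relevance (click probability given view) $C(e)\in[0,1]$ and an abandonment probability $\gamma(e)\ge 0$ with $0< C(e)+\gamma(e)\le 1$. For a ranking (ordering) $\langle e_{1},\dots,e_{N}\rangle$ of the entities, define its expected utility $$E(U)=\sum_{i=1}^{N}U(e_i)\,C(e_i)\prod_{j=1}^{i-1}\Big[1-\big(C(e_j)+\gamma(e_j)\big)\Big].$$ Then $E(U)$ is maximized (over all orderings) by placing the entities in descending order of $$CE(e)=\frac{U(e)\,C(e)}{C(e)+\gamma(e)}.$$
   Context: Click model: the user browses the ranked list from top to bottom; having viewed the entity at position $i$, the user clicks it with probability $C(e_i)$, abandons browsing with probability $\gamma(e_i)$, and otherwise proceeds to the next entity. Hence the click probability of the entity at position $i$ is $C(e_i)\prod_{j<i}[1-(C(e_j)+\gamma(e_j))]$, and $E(U)$ is the expected total utility of clicked entities. *)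

From mathcomp Require Import all_boot all_order all_algebra all_fingroup.
Set Implicit Arguments. Unset Strict Implicit. Unset Printing Implicit Defensive.
Import Order.TTheory GRing.Theory Num.Theory.
Local Open Scope ring_scope.

(* Entities are indexed by 'I_N.  A ranking is a permutation s : 'S_N;
   position i (0-based) holds entity s i. *)

Definition EU (R : realFieldType) (N : nat) (U C g : 'I_N -> R) (s : 'S_N) : R :=
  \sum_(i < N) (U (s i) * C (s i) *
     \prod_(j < N | (j < i)%N) (1 - (C (s j) + g (s j)))).

Definition CE (R : realFieldType) (N : nat) (U C g : 'I_N -> R) (e : 'I_N) : R :=
  U e * C e / (C e + g e).

From mathcomp Require Import all_boot all_order all_algebra all_fingroup.
From mathcomp Require Import ring.
Import Order.TTheory GRing.Theory Num.Theory.
Local Open Scope ring_scope.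

(* Exchange argument.  With a = U C and q = C + g, the expected utility of a
   ranking x :: rest is a x + (1 - q x) * (expected utility of rest), and
   CE = a / q.  Swapping two adjacent entities x, y changes the value by a
   nonnegative multiple of q x a y - q y a x, whose sign is that of CE y - CE x.
   So moving an entity of maximal CE to the front never decreases the value, and
   by induction neither does sorting any ranking into descending CE order. *)

Fixpoint cascade {R : pzSemiRingType} {T : Type} (a p : T -> R) (l : seq T) : R :=
  if l is x :: l' then a x + p x * cascade a p l' else 0.

Lemma cascade_codom (R : comPzSemiRingType) (T : Type) (a p : T -> R) n (f : 'I_n -> T) :
  cascade a p (codom f) = \sum_(i < n) a (f i) * \prod_(j < n | (j < i)%N) p (f j).
Proof.
elim: n f => [|n IH] f; first by rewrite codomE enum_ord0 big_ord0.
rewrite codomE enum_ordSl /= -map_comp -codomE IH big_ord_recl /=.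
rewrite [X in a _ * X]big_pred0 // mulr1.
congr (_ + _); rewrite mulr_sumr; apply: eq_bigr => i _.
by rewrite [in RHS]big_mkcond big_ord_recl /= mulrCA -big_mkcond.
Qed.

Section CascadeExchange.

Variables (R : numDomainType) (T : eqType) (a p r : T -> R).
Hypothesis p_ge0 : forall x, 0 <= p x.
Hypothesis exchange : forall x y, r y <= r x -> a y + p y * a x <= a x + p x * a y.

Let ranked := pairwise (fun x y => r y <= r x).

Lemma cascade_move_front y l1 l2 :
  all (fun x => r y <= r x) l1 -> cascade a p (y :: l1 ++ l2) <= cascade a p (l1 ++ y :: l2).
Proof.
elim: l1 => [|x l1 IH] //= /andP[ryx ry_l1].
set F := cascade a p (l1 ++ l2).
have -> : a y + p y * (a x + p x * F) = a y + p y * a x + p x * (p y * F) by ring.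
apply: le_trans (_ : _ <= a x + p x * a y + p x * (p y * F)) _.
  by rewrite lerD2r exchange.
by rewrite -addrA -mulrDr lerD2l ler_wpM2l // IH.
Qed.

Lemma cascade_le_ranked l' l : ranked l -> perm_eq l' l -> cascade a p l' <= cascade a p l.
Proof.
elim: l' l => [|y l' IH] l ranked_l perm_l.
  by move: perm_l; rewrite perm_sym => /perm_nilP ->.
have y_in_l : y \in l by rewrite -(perm_mem perm_l) mem_head.
move: ranked_l perm_l; case/splitPr: y_in_l => l1 l2 ranked_l perm_l.
move: ranked_l; rewrite /ranked pairwise_cat allrel_consr pairwise_cons.
case/and3P=> /andP[y_min_l1 l1_l2] ranked_l1 /andP[_ ranked_l2].
have perm_l' : perm_eq l' (l1 ++ l2).
  by rewrite -(perm_cons y); apply: perm_trans perm_l _; rewrite (perm_catCA l1 [:: y]).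
have ranked_l12 : ranked (l1 ++ l2) by rewrite /ranked pairwise_cat l1_l2 ranked_l1.
apply: le_trans (cascade_move_front y l1 l2 y_min_l1).
by rewrite /= lerD2l ler_wpM2l // IH.
Qed.

End CascadeExchange.

Lemma exchange_le_of_ratio_le (R : numFieldType) (ax ay qx qy : R) :
  0 < qx -> 0 < qy -> ay / qy <= ax / qx -> ay + (1 - qy) * ax <= ax + (1 - qx) * ay.
Proof.
move=> qx_gt0 qy_gt0.
rewrite ler_pdivrMr // mulrAC ler_pdivlMr // => le_yx.
have -> : ay + (1 - qy) * ax = ay + ax - qy * ax by ring.
have -> : ax + (1 - qx) * ay = ay + ax - ay * qx by ring.
by rewrite lerD2l lerN2 [qy * _]mulrC.
Qed.

Lemma perm_eq_codom_perm (T : finType) (s t : {perm T}) : perm_eq (codom s) (codom t).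
Proof.
have uniq_codom (u : {perm T}) : uniq (codom u).
  by rewrite codomE map_inj_uniq ?enum_uniq //; exact: perm_inj.
by apply: uniq_perm => // x; rewrite !perm_onto.
Qed.

Theorem theorem1 (R : realFieldType) (N : nat) (U C g : 'I_N -> R)
  (hU : forall e, 0 <= U e)
  (hC : forall e, 0 <= C e <= 1)
  (hg : forall e, 0 <= g e)
  (hCg : forall e, 0 < C e + g e <= 1)
  (s : 'S_N)
  (hdesc : forall i j : 'I_N, (i <= j)%N -> CE U C g (s j) <= CE U C g (s i)) :
  forall t : 'S_N, EU U C g t <= EU U C g s.
Proof.
move=> t.
pose a e := U e * C e.
pose p e := 1 - (C e + g e).
have EU_cascade (u : 'S_N) : EU U C g u = cascade a p (codom u) by rewrite cascade_codom.
rewrite !EU_cascade; apply: (@cascade_le_ranked _ _ _ _ (CE U C g)).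
- by move=> e; rewrite subr_ge0; case/andP: (hCg e).
- move=> x y; apply: exchange_le_of_ratio_le.
  + by case/andP: (hCg x).
  + by case/andP: (hCg y).
- rewrite codomE pairwise_map; apply: sub_pairwise hdesc _.
  rewrite -(pairwise_map val leq) val_enum_ord -sorted_pairwise ?iota_sorted //.
  exact: leq_trans.
- exact: perm_eq_codom_perm.
Qed.
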